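(* The metric $AWRF$ does not have a deepness threshold and does not satisfy sensitivity.
   Context: A population is a finite set $\mathcal{D}$ of candidates partitioned into two nonempty groups, a non-protected group $G_0$ and a protected group $G_1$; each candidate $d$ has a relevance score $y(d)\in\mathbb R$; uniform relevance means $y(d)=1$ for all $d\in\mathcal D$. Let $p_G=|G|/|\mathcal D|$ and $p_{\mathrm{groups}}=(p_{G_0},p_{G_1})$. For a candidate set $D\subseteq\mathcal D$ with $n=|D|$, a ranking is a bijection $r:\{1,\dots,n\}\to D$ and $r^{-1}(d)$ is the position of $d$. $\mathcal R_{\mathrm{first}}(D)$ ($\mathcal R_{\mathrm{last}}(D)$) is the set of rankings of $D$ in which every candidate of $G_1\cap D$ is ranked above (below) every candidate of $G_0\cap D$. Position bias $b(k)=1/\log_2(k+1)$. $AWRF$: $p_{\mathrm{Exp}}(r)=\frac{1}{\sum_{k=1}^n b(k)}\left(\sum_{d\in G_0\cap D} b(r^{-1}(d)),\ \sum_{d\in G_1\cap D} b(r^{-1}(d))\right)$, $p_{\mathrm{sum}}(r)=\frac12(p_{\mathrm{Exp}}(r)+p_{\mathrm{groups}})$, $\Delta_{KL}(p\|q)=\sum_i p_i\log_2(p_i/q_i)$ (with $0\log 0=0$), $AWRF(r)=1-\left[\frac12\Delta_{KL}(p_{\mathrm{Exp}}(r)\|p_{\mathrm{sum}}(r))+\frac12\Delta_{KL}(p_{\mathrm{groups}}\|p_{\mathrm{sum}}(r))\right]$. Deepness threshold: $m$ has one if there exists $N'\in\mathbb N$ such that for every population $\mathcal D$ with uniform relevance,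 all $N\ge N'$, all $D_N,D_N'\subsetneq\mathcal D$ with $|D_N|=|D_N'|=2N$, $|D_N\cap G_1|=1$, $|D_N'\cap G_1|=N$, and all $r\in\mathcal R_{\mathrm{first}}(D_N)$, $r'\in\mathcal R_{\mathrm{last}}(D_N')$: $m(r)<m(r')$. Sensitivity: $m$ satisfies it if for every population $\mathcal D$ with uniform relevance, every $D\subsetneq\mathcal D$ with $|D|=n$, every ranking $r$ of $D$ and every $d'\in G_0\setminus D$, the ranking $r'=\langle r(1),\dots,r(n),d'\rangle$ satisfies $m(r')<m(r)$. *)

From mathcomp Require Import all_boot.
From Stdlib Require Import Reals.

Set Implicit Arguments.
Unset Strict Implicit.
Unset Printing Implicit Defensive.

(* A population: a finite type T; [g x = true] iff x is in the protected
   group G1, [g x = false] iff x is in the non-protected group G0. Relevance is uniform (y = 1) and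
   AWRF does not depend on relevance, so it is not represented. *)
Definition population_ok (T : finType) (g : T -> bool) : Prop :=
  (exists x, g x) /\ (exists x, ~~ g x).

(* A ranking of D is a duplicate-free sequence enumerating exactly D;
   the candidate at index i (0-based) is at position i+1. *)
Definition ranking_of (T : finType) (D : {set T}) (s : seq T) : Prop :=
  uniq s /\ (forall x, (x \in s) = (x \in D)).

Definition pos (T : finType) (s : seq T) (x : T) : nat := (index x s).+1.

Definition R_first (T : finType) (g : T -> bool) (D : {set T}) (s : seq T) : Prop :=
  ranking_of D s /\
  (forall x y, x \in s -> y \in s -> g x -> ~~ g y -> (pos s x < pos s y)%N).

Definition R_last (T : finType) (g : T -> bool) (D : {set T}) (s : seq T) : Prop :=
  ranking_of D s /\
  (forall x y, x \in s -> y \in s -> g x -> ~~ g y -> (pos s y < pos s x)%N).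

Definition log2 (x : R) : R := (ln x / ln 2)%R.

Definition bias (k : nat) : R := (1 / log2 (INR k + 1))%R.

Fixpoint expo (T : Type) (P : T -> bool) (s : seq T) (k : nat) : R :=
  match s with
  | [::] => 0%R
  | x :: s' => ((if P x then bias k else 0) + expo P s' k.+1)%R
  end.

Definition kl_term (p q : R) : R :=
  if Req_EM_T p 0 then 0%R else (p * log2 (p / q))%R.

Definition KL2 (p0 p1 q0 q1 : R) : R := (kl_term p0 q0 + kl_term p1 q1)%R.

Definition metric := forall (T : finType) (g : T -> bool), seq T -> R.

Definition AWRF : metric := fun T g s =>
  let Z := expo (fun _ => true) s 1 in
  let e0 := (expo (fun x => ~~ g x) s 1 / Z)%R in
  let e1 := (expo g s 1 / Z)%R in
  let pg0 := (INR #|[set x | ~~ g x]| / INR #|T|)%R in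
  let pg1 := (INR #|[set x | g x]| / INR #|T|)%R in
  let q0 := ((e0 + pg0) / 2)%R in
  let q1 := ((e1 + pg1) / 2)%R in
  (1 - (/2 * KL2 e0 e1 q0 q1 + /2 * KL2 pg0 pg1 q0 q1))%R.

Definition has_deepness_threshold (m : metric) : Prop :=
  exists N' : nat,
    forall (T : finType) (g : T -> bool), population_ok g ->
    forall N : nat, (N' <= N)%N ->
    forall (DN DN' : {set T}),
      DN \proper [set: T] -> DN' \proper [set: T] ->
      #|DN| = (2 * N)%N -> #|DN'| = (2 * N)%N ->
      #|DN :&: [set x | g x]| = 1%N -> #|DN' :&: [set x | g x]| = N ->
      forall r r' : seq T, R_first g DN r -> R_last g DN' r' ->
      (m T g r < m T g r')%R.

Definition sensitivity (m : metric) : Prop :=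
  forall (T : finType) (g : T -> bool), population_ok g ->
  forall (D : {set T}), D \proper [set: T] -> (0 < #|D|)%N ->
  forall r : seq T, ranking_of D r ->
  forall d' : T, ~~ g d' -> d' \notin D ->
  (m T g (rcons r d') < m T g r)%R.

From Pilot Require Import Defs.
From mathcomp Require Import all_boot zify.
From Stdlib Require Import Reals Lra.

(* AWRF depends on a ranking only through the share x of its exposure that goes
   to the protected group: if p is the protected share of the population, it
   equals 1 - (J(1-x, 1-p) + J(x, p)) / 2, where J(a, b) sums the
   Kullback-Leibler terms of a and b against their midpoint.  J(a, b) is convex
   in a with minimum at a = b, so AWRF decreases as x moves away from p.

   Sensitivity fails: appending a non-protected candidate to a ranking without
   protected candidates keeps x = 0.

   Deepness fails for N protected candidates in a population of size N + 2N^2,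
   where p <= 1/(2N): a single protected candidate on top already gets
   x = 1/Z >= p, Z <= 2N being the total exposure of 2N positions, and the N
   protected candidates ranked at the bottom get exposure at least N b(2N) >= 1,
   hence an even larger x. *)

Set Implicit Arguments.
Unset Strict Implicit.
Unset Printing Implicit Defensive.

Open Scope R_scope.

Lemma ln2_gt0 : 0 < ln 2.
Proof. have := ln_lt_2; lra. Qed.

Lemma ln_le x y : 0 < x -> x <= y -> ln x <= ln y.
Proof.
move=> x_gt0 /Rle_lt_or_eq_dec [xy | ->]; last exact: Rle_refl.
exact/Rlt_le/ln_increasing.
Qed.

Lemma ln_ge0 x : 1 <= x -> 0 <= ln x.
Proof. by move=> x_ge1; rewrite -ln_1; apply: ln_le; lra. Qed.

Lemma ln_le0 x : 0 < x -> x <= 1 -> ln x <= 0.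
Proof. by move=> x_gt0 x_le1; rewrite -ln_1; apply: ln_le. Qed.

Lemma ln_le_sub1 x : 0 < x -> ln x <= x - 1.
Proof. by move=> x_gt0; have := exp_ineq1_le (ln x); rewrite exp_ln //; lra. Qed.

Lemma ln_sub_ge u v : 0 < u -> 0 < v -> 1 - v / u <= ln u - ln v.
Proof.
move=> u_gt0 v_gt0; have := ln_le_sub1 (Rdiv_lt_0_compat _ _ v_gt0 u_gt0).
by rewrite /Rdiv ln_mult ?ln_Rinv //; [lra | apply: Rinv_0_lt_compat].
Qed.

Lemma Rle_div_l a b c : 0 < c -> a <= b * c -> a / c <= b.
Proof.
move=> c_gt0 le_ab; apply: (Rmult_le_reg_r c) => //.
by rewrite /Rdiv Rmult_assoc Rinv_l; lra.
Qed.

Lemma Rle_div_r a b c : 0 < c -> a * c <= b -> a <= b / c.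
Proof.
move=> c_gt0 le_ab; apply: (Rmult_le_reg_r c) => //.
by rewrite /Rdiv Rmult_assoc Rinv_l; lra.
Qed.

Lemma INR_addn m n : INR (m + n) = INR m + INR n.
Proof. by rewrite -plusE plus_INR. Qed.

Lemma INR_muln m n : INR (m * n) = INR m * INR n.
Proof. by rewrite -multE mult_INR. Qed.

Lemma bias_ln (k : nat) : bias k = ln 2 / ln (INR k + 1).
Proof. by rewrite /bias /log2 /Rdiv Rmult_1_l -/(Rdiv _ _) Rinv_div. Qed.

Lemma ln_succ_ge (k : nat) : (1 <= k)%nat -> ln 2 <= ln (INR k + 1).
Proof. by move=> /leP/le_INR k_ge1; apply: ln_le; rewrite /= in k_ge1; lra. Qed.

Lemma bias_gt0 (k : nat) : (1 <= k)%nat -> 0 < bias k.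
Proof.
move=> /ln_succ_ge; rewrite bias_ln; have := ln2_gt0 => *.
apply: Rdiv_lt_0_compat; lra.
Qed.

Lemma bias_le1 (k : nat) : (1 <= k)%nat -> bias k <= 1.
Proof.
move=> /ln_succ_ge; rewrite bias_ln; have := ln2_gt0 => *.
apply: Rle_div_l; lra.
Qed.

Lemma bias1 : bias 1 = 1.
Proof.
rewrite bias_ln /= (_ : 1 + 1 = 2); last lra.
by apply: Rdiv_diag; have := ln2_gt0; lra.
Qed.

Lemma bias_antitone (j k : nat) : (1 <= j <= k)%nat -> bias k <= bias j.
Proof.
case/andP=> /ln_succ_ge ln_j /leP/le_INR jk; rewrite !bias_ln.
have := ln2_gt0; have := pos_INR j => *.
apply: Rmult_le_compat_l; first lra.
apply: Rinv_le_contravar; first lra.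
apply: ln_le; lra.
Qed.

Lemma double_lt_exp2 (n : nat) : (3 <= n)%nat -> (2 * n < 2 ^ n)%nat.
Proof.
elim: n => // n IH; rewrite leq_eqVlt => /predU1P [<- // | n_ge3].
by have := IH n_ge3; rewrite Nat.pow_succ_r'; lia.
Qed.

Lemma bias_double_ge (n : nat) : (3 <= n)%nat -> 1 <= INR n * bias (2 * n).
Proof.
move=> n_ge3; rewrite bias_ln.
have ln_bound : ln (INR (2 * n) + 1) <= INR n * ln 2.
  rewrite -S_INR -ln_pow; last lra.
  apply: ln_le; first by apply: lt_0_INR; lia.
  rewrite -[2]/(INR 2) -pow_INR.
  by apply/le_INR; have := double_lt_exp2 n_ge3; lia.
have := @ln_succ_ge (2 * n) ltac:(lia); have := ln2_gt0 => *.
rewrite Rmult_div_assoc; apply: Rle_div_r; lra.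
Qed.

Section Exposure.
Variable T : Type.
Implicit Types (P : T -> bool) (s : seq T) (k : nat).

Lemma expo_predC P s k : expo P s k + expo (fun x => ~~ P x) s k = expo xpredT s k.
Proof.
elim: s k => [|x s IH] k /=; first lra.
by rewrite -(IH k.+1); case: (P x) => /=; lra.
Qed.

Lemma expo_cat P s1 s2 k :
  expo P (s1 ++ s2) k = expo P s1 k + expo P s2 (k + size s1).
Proof.
elim: s1 k => [|x s1 IH] k /=; first by rewrite addn0; lra.
by rewrite IH addSnnS; lra.
Qed.

Lemma expo_all P s k : all P s -> expo P s k = expo xpredT s k.
Proof. by elim: s k => [|x s IH] k //= /andP [-> /IH ->]. Qed.

Lemma expo_hasNo P s k : ~~ has P s -> expo P s k = 0.
Proof.
elim: s k => [|x s IH] k //=; rewrite negb_or => /andP [/negbTE -> /IH ->].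
lra.
Qed.

Lemma expo_ge c s k :
  (forall j, (k <= j < k + size s)%nat -> c <= bias j) ->
  INR (size s) * c <= expo xpredT s k.
Proof.
elim: s k => [|x s IH] k c_le; first by rewrite /=; lra.
have {}c_le j : (k <= j <= k + size s)%nat -> c <= bias j.
  by move=> hj; apply: c_le => /=; lia.
rewrite -[size _]/(size s).+1 S_INR /=.
have := c_le k ltac:(lia); have := IH k.+1 (fun j hj => c_le j ltac:(lia)).
lra.
Qed.

Lemma expo_ge0 s k : (1 <= k)%nat -> 0 <= expo xpredT s k.
Proof.
move=> k_ge1; rewrite -(Rmult_0_r (INR (size s))).
by apply: expo_ge => j j_ge; apply/Rlt_le/bias_gt0; lia.
Qed.

Lemma expo_gt0 s k : (1 <= k)%nat -> (0 < size s)%nat -> 0 < expo xpredT s k.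
Proof.
case: s => // x s k_ge1 _ /=.
by have := bias_gt0 k_ge1; have := @expo_ge0 s k.+1 ltac:(lia); lra.
Qed.

Lemma expo_le_size s k : (1 <= k)%nat -> expo xpredT s k <= INR (size s).
Proof.
elim: s k => [|x s IH] k k_ge1; first by rewrite /=; lra.
rewrite -[size _]/(size s).+1 S_INR /=.
by have := bias_le1 k_ge1; have := IH k.+1 ltac:(lia); lra.
Qed.

End Exposure.

Lemma expo_size (T U : Type) (s : seq T) (t : seq U) k :
  size s = size t -> expo xpredT s k = expo xpredT t k.
Proof. by elim: s t k => [|x s IH] [|y t] k //= [/IH ->]. Qed.

Lemma kl_termE p q : 0 < p -> kl_term p q = p * log2 (p / q).
Proof. by move=> p_gt0; rewrite /kl_term; case: Req_EM_T => // p0; lra. Qed.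

Definition jsd (a b : R) : R := kl_term a ((a + b) / 2) + kl_term b ((a + b) / 2).

Lemma jsdE a b : 0 < a -> 0 < b ->
  jsd a b = (a * ln (2 * a / (a + b)) + b * ln (2 * b / (a + b))) / ln 2.
Proof.
move=> a_gt0 b_gt0; rewrite /jsd !kl_termE // /log2.
rewrite (_ : a / ((a + b) / 2) = 2 * a / (a + b)); last by field; lra.
rewrite (_ : b / ((a + b) / 2) = 2 * b / (a + b)); last by field; lra.
by field; have := ln2_gt0; lra.
Qed.

Lemma jsd_tangent a a' b : 0 < a -> 0 < a' -> 0 < b ->
  (a' - a) * ln (2 * a / (a + b)) / ln 2 <= jsd a' b - jsd a b.
Proof.
move=> a_gt0 a'_gt0 b_gt0; rewrite !jsdE //.
set u := 2 * a / (a + b); set u' := 2 * a' / (a' + b).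
set v := 2 * b / (a + b); set v' := 2 * b / (a' + b).
have u_gt0 : 0 < u by apply: Rdiv_lt_0_compat; lra.
have u'_gt0 : 0 < u' by apply: Rdiv_lt_0_compat; lra.
have v_gt0 : 0 < v by apply: Rdiv_lt_0_compat; lra.
have v'_gt0 : 0 < v' by apply: Rdiv_lt_0_compat; lra.
(* the tangent-line bounds [1 - 1/t <= ln t] cancel exactly *)
have balance : a' * (1 - u / u') + b * (1 - v / v') = 0.
  by rewrite /u /u' /v /v'; field; lra.
have gap : 0 <= a' * (ln u' - ln u) + b * (ln v' - ln v).
  have := Rmult_le_compat_l a' _ _ (Rlt_le _ _ a'_gt0) (ln_sub_ge u'_gt0 u_gt0).
  have := Rmult_le_compat_l b _ _ (Rlt_le _ _ b_gt0) (ln_sub_ge v'_gt0 v_gt0).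
  lra.
have ln2_pos := ln2_gt0.
have -> : (a' * ln u' + b * ln v') / ln 2 - (a * ln u + b * ln v) / ln 2
          = (a' - a) * ln u / ln 2 + (a' * (ln u' - ln u) + b * (ln v' - ln v)) / ln 2.
  by field; lra.
have : 0 <= (a' * (ln u' - ln u) + b * (ln v' - ln v)) / ln 2.
  by apply: Rle_div_r; lra.
lra.
Qed.

Lemma jsd_le_below a a' b : 0 < a -> a <= a' -> a' <= b -> jsd a' b <= jsd a b.
Proof.
move=> a_gt0 aa' a'b.
have := @jsd_tangent a' a b ltac:(lra) a_gt0 ltac:(lra).
have ln_le0 : ln (2 * a' / (a' + b)) <= 0.
  by apply: ln_le0; [apply: Rdiv_lt_0_compat | apply: Rle_div_l]; lra.
have : 0 <= (a - a') * ln (2 * a' / (a' + b)) / ln 2.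
  by apply: Rle_div_r; [exact: ln2_gt0 | nra].
lra.
Qed.

Lemma jsd_le_above a a' b : 0 < b -> b <= a -> a <= a' -> jsd a b <= jsd a' b.
Proof.
move=> b_gt0 ba aa'.
have := @jsd_tangent a a' b ltac:(lra) ltac:(lra) b_gt0.
have ln_ge0 : 0 <= ln (2 * a / (a + b)).
  by apply: ln_ge0; apply: Rle_div_r; lra.
have : 0 <= (a' - a) * ln (2 * a / (a + b)) / ln 2.
  by apply: Rle_div_r; [exact: ln2_gt0 | nra].
lra.
Qed.

Definition awrf_share (x p : R) : R := 1 - (jsd (1 - x) (1 - p) + jsd x p) / 2.

Lemma awrf_share_antitone p x y : 0 < p -> p <= x -> x <= y -> y < 1 ->
  awrf_share y p <= awrf_share x p.
Proof.
move=> p_gt0 px xy y_lt1; rewrite /awrf_share.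
have := @jsd_le_below (1 - y) (1 - x) (1 - p) ltac:(lra) ltac:(lra) ltac:(lra).
have := @jsd_le_above x y p p_gt0 px xy.
lra.
Qed.

Definition exposure_share (T : finType) (g : T -> bool) (s : seq T) : R :=
  expo g s 1 / expo xpredT s 1.

Definition population_share (T : finType) (g : T -> bool) : R :=
  INR #|[set x | g x]| / INR #|T|.

Lemma AWRF_shareE (T : finType) (g : T -> bool) (s : seq T) : (0 < size s)%nat ->
  AWRF g s = awrf_share (exposure_share g s) (population_share g).
Proof.
move=> s_gt0.
have Z_gt0 : 0 < expo xpredT s 1 by apply: expo_gt0.
have T_gt0 : 0 < INR #|T|.
  case: s s_gt0 {Z_gt0} => // x s _.
  by apply/lt_0_INR/ltP/card_gt0P; exists x.
have e0 : expo (fun x => ~~ g x) s 1 / expo xpredT s 1 = 1 - exposure_share g s.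
  by rewrite /exposure_share -(expo_predC g s 1) in Z_gt0 *; field; lra.
have p0 : INR #|[set x | ~~ g x]| / INR #|T| = 1 - population_share g.
  have -> : [set x | ~~ g x] = ~: [set x | g x] by apply/setP => x; rewrite !inE.
  rewrite /population_share -(cardsC [set x | g x]) INR_addn in T_gt0 *.
  by field; lra.
rewrite /AWRF; cbv beta zeta; rewrite e0 p0.
by rewrite /awrf_share /jsd /KL2 /exposure_share /population_share; lra.
Qed.

Lemma AWRF_rcons_unprotected (T : finType) (g : T -> bool) (r : seq T) (d : T) :
  (0 < size r)%nat -> ~~ has g r -> ~~ g d -> AWRF g (rcons r d) = AWRF g r.
Proof.
move=> r_gt0 r_unprot d_unprot.
have rd_unprot : ~~ has g (rcons r d) by rewrite has_rcons negb_or d_unprot.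
rewrite !AWRF_shareE ?size_rcons // /exposure_share.
by rewrite (expo_hasNo _ rd_unprot) (expo_hasNo _ r_unprot) /Rdiv !Rmult_0_l.
Qed.

Lemma index_cat_lt (T : eqType) (P : pred T) (s1 s2 : seq T) (x y : T) :
  all P s1 -> ~~ has P s2 -> x \in s1 ++ s2 -> y \in s1 ++ s2 -> P x -> ~~ P y ->
  (index x (s1 ++ s2) < index y (s1 ++ s2))%nat.
Proof.
move=> /allP s1P /hasPn s2nP; rewrite !mem_cat => x_in y_in Px nPy.
have x_s1 : x \in s1 by case/orP: x_in => // /s2nP; rewrite Px.
have y_s1 : y \notin s1 by apply: contra nPy => /s1P.
rewrite !index_cat x_s1 (negbTE y_s1).
by rewrite -index_mem in x_s1; apply: leq_trans x_s1 (leq_addr _ _).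
Qed.

Lemma R_first_cat (T : finType) (g : T -> bool) (s1 s2 : seq T) :
  uniq (s1 ++ s2) -> all g s1 -> ~~ has g s2 -> R_first g [set x in s1 ++ s2] (s1 ++ s2).
Proof.
move=> s_uniq s1_prot s2_unprot; split; first by split=> // x; rewrite inE.
by move=> x y *; rewrite /Defs.pos ltnS; apply: index_cat_lt s1_prot s2_unprot _ _ _ _.
Qed.

Lemma R_last_cat (T : finType) (g : T -> bool) (s1 s2 : seq T) :
  uniq (s1 ++ s2) -> ~~ has g s1 -> all g s2 -> R_last g [set x in s1 ++ s2] (s1 ++ s2).
Proof.
move=> s_uniq s1_unprot s2_prot; split; first by split=> // x; rewrite inE.
move=> x y x_in y_in gx ngy; rewrite /Defs.pos ltnS.
apply: (@index_cat_lt _ (fun x => ~~ g x)) => //; last by rewrite negbK.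
- by apply/allP => z z_in; apply: (hasPn s1_unprot).
- by apply/hasPn => z /(allP s2_prot) ->.
Qed.

Lemma card_set_seq (T : finType) (s : seq T) : uniq s -> #|[set x in s]| = size s.
Proof. by move=> /card_uniqP <-; rewrite cardsE. Qed.

Lemma card_set_seqI (T : finType) (P : pred T) (s : seq T) :
  uniq s -> #|[set x in s] :&: [set x | P x]| = count P s.
Proof.
move=> s_uniq; rewrite -size_filter -card_set_seq ?filter_uniq //.
by apply: eq_card => x; rewrite !inE mem_filter andbC.
Qed.

Lemma population_ok_is_inl (A B : finType) (a : A) (b : B) : population_ok (@is_inl A B).
Proof. by split; [exists (inl a) | exists (inr b)]. Qed.

Lemma count_is_inl_mapl (A B : Type) (s : seq A) :
  count is_inl (map (@inl A B) s) = size s.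
Proof. by elim: s => //= x s ->. Qed.

Lemma count_is_inl_mapr (A B : Type) (s : seq B) :
  count is_inl (map (@inr A B) s) = 0%nat.
Proof. by elim: s. Qed.

Lemma not_sensitivity_AWRF : ~ sensitivity AWRF.
Proof.
move=> /(_ ('I_1 + bool)%type is_inl (population_ok_is_inl ord0 true)) sens.
have D_proper : [set inr true] \proper [set: 'I_1 + bool].
  by rewrite properEcard subsetT cards1 cardsT card_sum card_ord card_bool.
have r_rank : ranking_of [set inr true : 'I_1 + bool] [:: inr true].
  by split=> // x; rewrite !inE.
have D_gt0 : (0 < #|[set inr true : 'I_1 + bool]|)%nat by rewrite cards1.
have := sens _ D_proper D_gt0 _ r_rank (inr false) isT ltac:(by rewrite inE).
by rewrite AWRF_rcons_unprotected //; apply: Rlt_irrefl.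
Qed.

Section DeepnessCounterexample.

Variable N : nat.
Hypothesis N_ge3 : (3 <= N)%nat.

Local Notation M := (2 * N * N)%nat.
Local Notation T := ('I_N + 'I_M)%type.

Let N_gt0 : (0 < N)%nat := leq_trans (isT : 0 < 3)%nat N_ge3.

Definition top_ranking : seq T :=
  [:: inl (Ordinal N_gt0)] ++ map inr (take (2 * N).-1 (enum 'I_M)).

Definition bottom_ranking : seq T :=
  map inr (take N (enum 'I_M)) ++ map inl (enum 'I_N).

Let size_take_enum k : (k <= M)%nat -> size (take k (enum 'I_M)) = k.
Proof. by move=> k_le; rewrite size_takel // size_enum_ord. Qed.

Lemma size_top_ranking : size top_ranking = (2 * N)%nat.
Proof. by rewrite /top_ranking size_cat size_map size_take_enum /=; nia. Qed.

Lemma size_bottom_ranking : size bottom_ranking = (2 * N)%nat.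
Proof.
rewrite /bottom_ranking size_cat size_map [size (map _ _)]size_map size_enum_ord.
by rewrite size_take_enum; nia.
Qed.

Lemma uniq_top_ranking : uniq top_ranking.
Proof.
rewrite /top_ranking cat_uniq (map_inj_uniq inr_inj) take_uniq ?enum_uniq //=.
by rewrite andbT; apply/hasPn => _ /mapP [i _ ->]; rewrite inE.
Qed.

Lemma uniq_bottom_ranking : uniq bottom_ranking.
Proof.
rewrite /bottom_ranking cat_uniq (map_inj_uniq inr_inj) (map_inj_uniq inl_inj).
rewrite take_uniq ?enum_uniq //= andbT.
by apply/hasPn => _ /mapP [i _ ->]; apply/mapP => -[].
Qed.

Lemma R_first_top_ranking : R_first is_inl [set x in top_ranking] top_ranking.
Proof.
have := uniq_top_ranking; rewrite /top_ranking => s_uniq.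
by apply: (R_first_cat s_uniq) => //; apply/hasPn => _ /mapP [i _ ->].
Qed.

Lemma R_last_bottom_ranking : R_last is_inl [set x in bottom_ranking] bottom_ranking.
Proof.
have := uniq_bottom_ranking; rewrite /bottom_ranking => s_uniq.
apply: (R_last_cat s_uniq); first by apply/hasPn => _ /mapP [i _ ->].
by apply/allP => _ /mapP [i _ ->].
Qed.

Lemma proper_set_ranking (s : seq T) :
  size s = (2 * N)%nat -> [set x in s] \proper [set: T].
Proof.
move=> s_size; rewrite properEcard subsetT cardsT card_sum !card_ord cardsE.
by apply: leq_ltn_trans (card_size s) _; rewrite s_size; nia.
Qed.

Lemma population_ok_counterexample : population_ok (@is_inl 'I_N 'I_M).
Proof.
have M_gt0 : (0 < M)%nat by nia.
exact: population_ok_is_inl (Ordinal N_gt0) (Ordinal M_gt0).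
Qed.

Lemma card_protected_top_ranking :
  #|[set x in top_ranking] :&: [set x | is_inl x]| = 1%nat.
Proof.
by rewrite card_set_seqI ?uniq_top_ranking // /top_ranking count_cat count_is_inl_mapr.
Qed.

Lemma card_protected_bottom_ranking :
  #|[set x in bottom_ranking] :&: [set x | is_inl x]| = N.
Proof.
rewrite card_set_seqI ?uniq_bottom_ranking // /bottom_ranking count_cat.
by rewrite count_is_inl_mapr count_is_inl_mapl size_enum_ord.
Qed.

Lemma population_share_is_inl :
  population_share (@is_inl 'I_N 'I_M) = INR N / INR (N + M).
Proof.
rewrite /population_share.
have -> : [set x : T | is_inl x] = inl @: [set: 'I_N].
  apply/setP => -[i | j]; rewrite !inE; first by rewrite imset_f.
  by apply/esym/imsetP => -[].
by rewrite card_imset ?cardsT ?card_sum ?card_ord //; apply: inl_inj.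
Qed.

Local Notation Z := (expo xpredT top_ranking 1).
Local Notation tail_exposure := (expo xpredT (map inl (enum 'I_N) : seq T) N.+1).

Lemma exposure_share_top_ranking : exposure_share is_inl top_ranking = / Z.
Proof.
have prot : expo is_inl top_ranking 1 = 1.
  have unprot : ~~ has is_inl (map inr (take (2 * N).-1 (enum 'I_M)) : seq T).
    by apply/hasPn => _ /mapP [i _ ->].
  by rewrite /top_ranking expo_cat (expo_hasNo _ unprot) /= bias1; lra.
by rewrite /exposure_share prot /Rdiv Rmult_1_l.
Qed.

Lemma total_exposure_bottom_ranking : expo xpredT bottom_ranking 1 = Z.
Proof. by apply: expo_size; rewrite size_bottom_ranking size_top_ranking. Qed.

Lemma exposure_share_bottom_ranking :
  exposure_share is_inl bottom_ranking = tail_exposure / Z.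
Proof.
have prot : expo is_inl bottom_ranking 1 = tail_exposure.
  have unprot : ~~ has is_inl (map inr (take N (enum 'I_M)) : seq T).
    by apply/hasPn => _ /mapP [i _ ->].
  have prot : all is_inl (map inl (enum 'I_N) : seq T).
    by apply/allP => _ /mapP [i _ ->].
  rewrite /bottom_ranking expo_cat (expo_hasNo _ unprot) (expo_all _ prot).
  by rewrite size_map size_take_enum ?add1n ?Rplus_0_l //; nia.
by rewrite /exposure_share total_exposure_bottom_ranking prot.
Qed.

Lemma total_exposure_gt0 : 0 < Z.
Proof. by apply: expo_gt0; rewrite ?size_top_ranking //; lia. Qed.

Lemma total_exposure_le : Z <= 2 * INR N.
Proof.
have := @expo_le_size _ top_ranking 1 isT.
by rewrite size_top_ranking INR_muln [INR 2]/=; lra.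
Qed.

Lemma tail_exposure_ge1 : 1 <= tail_exposure.
Proof.
have tail_ge : INR N * bias (2 * N) <= tail_exposure.
  have := @expo_ge _ (bias (2 * N)) (map inl (enum 'I_N) : seq T) N.+1.
  rewrite size_map size_enum_ord; apply=> j /andP [j_ge j_lt].
  by apply: bias_antitone; lia.
exact: Rle_trans (bias_double_ge N_ge3) tail_ge.
Qed.

Lemma tail_exposure_lt_total : tail_exposure < Z.
Proof.
rewrite -total_exposure_bottom_ranking /bottom_ranking expo_cat size_map.
rewrite size_take_enum ?add1n; last nia.
set head := expo xpredT _ 1; set tail := expo xpredT _ N.+1.
have : 0 < head by apply: expo_gt0; rewrite // size_map size_take_enum; nia.
lra.
Qed.

Lemma population_share_le : INR N / INR (N + M) <= / Z.
Proof.
have Z_gt0 := total_exposure_gt0.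
have NZ : INR N * Z <= INR (N + M).
  have -> : INR (N + M) = INR N + 2 * INR N * INR N.
    by rewrite INR_addn !INR_muln [INR 2]/=; lra.
  have := total_exposure_le; have := pos_INR N; nra.
apply: Rle_div_l; first by apply: lt_0_INR; lia.
rewrite -[INR N](Rmult_1_r) -(Rinv_r Z); last lra.
have := Rinv_0_lt_compat _ Z_gt0; nra.
Qed.

Lemma AWRF_bottom_le_top : AWRF is_inl bottom_ranking <= AWRF is_inl top_ranking.
Proof.
have size_gt0 : (0 < 2 * N)%nat by lia.
rewrite !AWRF_shareE ?size_top_ranking ?size_bottom_ranking //.
rewrite exposure_share_top_ranking exposure_share_bottom_ranking population_share_is_inl.
have Z_gt0 := total_exposure_gt0.
have tail_ge := tail_exposure_ge1; have tail_lt := tail_exposure_lt_total.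
apply: awrf_share_antitone.
- by apply: Rdiv_lt_0_compat; apply: lt_0_INR; lia.
- exact: population_share_le.
- rewrite -[/ Z]Rmult_1_l; apply: Rmult_le_compat_r => //.
  exact/Rlt_le/Rinv_0_lt_compat.
- by apply: (Rmult_lt_reg_r Z); rewrite // /Rdiv Rmult_assoc Rinv_l; lra.
Qed.

End DeepnessCounterexample.

Lemma not_deepness_threshold_AWRF : ~ has_deepness_threshold AWRF.
Proof.
case=> N' deep; have N_ge3 : (3 <= N' + 3)%nat by rewrite leq_addl.
apply: Rle_not_lt (AWRF_bottom_le_top N_ge3) _.
apply: (deep _ _ (population_ok_counterexample N_ge3) _ (leq_addr 3 N')).
- exact: proper_set_ranking (size_top_ranking N_ge3).
- exact: proper_set_ranking (size_bottom_ranking N_ge3).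
- by rewrite card_set_seq ?size_top_ranking ?uniq_top_ranking.
- by rewrite card_set_seq ?size_bottom_ranking ?uniq_bottom_ranking.
- exact: card_protected_top_ranking.
- exact: card_protected_bottom_ranking.
- exact: R_first_top_ranking.
- exact: R_last_bottom_ranking.
Qed.

Theorem theorem10 : ~ has_deepness_threshold AWRF /\ ~ sensitivity AWRF.
Proof. split; [exact: not_deepness_threshold_AWRF | exact: not_sensitivity_AWRF]. Qed.
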